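(* Let $\sum_{n=1}^{\infty}x_n$ be a conditionally convergent series of reals and $I$ an ideal on $\mathbb{N}$ containing $\mathrm{Fin}$. Write $x^{+}=\max\{x,0\}$, $x^{-}=\max\{-x,0\}$. Then: (1) $SR_I(x_n)=\{\sum_{n=1}^{\infty}x_n\}$ if and only if $\sum_{n\in A}|x_n|<\infty$ for every $A\in I$; (2) if there exists $A\in I$ with $\sum_{n\in A}x_n^{+}=\sum_{n\in A}x_n^{-}=\infty$, then $SR_I(x_n)=\mathbb{R}$; (3) if there exists $A\in I$ with $\sum_{n\in A}x_n^{+}=\infty$, and every $A\in I$ with $\sum_{n\in A}x_n^{+}=\infty$ satisfies $\sum_{n\in A}x_n^{-}<\infty$, then $SR_I(x_n)\supseteq(-\infty,\sum_{n=1}^{\infty}x_n]$; (4) if there exists $B\in I$ with $\sum_{n\in B}x_n^{-}=\infty$, and every $B\in I$ with $\sum_{n\in B}x_n^{-}=\infty$ satisfies $\sum_{n\in B}x_n^{+}<\infty$, then $SR_I(x_n)\supseteq[\sum_{n=1}^{\infty}x_n,\infty)$. Moreover, for every conditionally convergent series exactly one of the four hypotheses (the condition in (1), and the hypotheses of (2), (3), (4)) holds.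
   Context: An ideal on $\mathbb{N}$ is a family $I\subseteq P(\mathbb{N})$ closed under finite unions and subsets with $\mathbb{N}\notin I$; $\mathrm{Fin}$ is the ideal of finite sets. $S_\infty$ is the set of permutations of $\mathbb{N}$, and for $\sigma\in S_\infty$, $\mathrm{supp}(\sigma)=\{n:\sigma(n)\neq n\}$. The ideally supported sum range is $SR_I(x_n)=\{\sum_{n=1}^{\infty}x_{\sigma(n)} : \sigma\in S_\infty,\ \mathrm{supp}(\sigma)\in I,\ \sum_{n}x_{\sigma(n)}\text{ converges}\}$. *)

From Stdlib Require Import Reals List.
Open Scope R_scope.

(* Subsets of N are predicates nat -> Prop (N is indexed from 0). *)
Definition subset_of (A B : nat -> Prop) : Prop := forall n, A n -> B n.

Definition finite_set (A : nat -> Prop) : Prop :=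
  exists N : nat, forall n, A n -> (n < N)%nat.

Definition is_ideal (I : (nat -> Prop) -> Prop) : Prop :=
  (forall A B, I A -> I B -> I (fun n => A n \/ B n)) /\
  (forall A B, I A -> subset_of B A -> I B) /\
  ~ I (fun _ => True).

Definition is_perm (s : nat -> nat) : Prop :=
  (forall m n, s m = s n -> m = n) /\ (forall m, exists n, s n = m).

Definition supp (s : nat -> nat) : nat -> Prop := fun n => s n <> n.

Definition SR (I : (nat -> Prop) -> Prop) (x : nat -> R) (r : R) : Prop :=
  exists s : nat -> nat, is_perm s /\ I (supp s) /\
    Un_cv (fun N => sum_f_R0 (fun n => x (s n)) N) r.

Definition lsum (l : list R) : R := fold_right Rplus 0 l.

(* For nonnegative f: sum_{n in A} f n < infinity, i.e. the sums of f over
   finite subsets of A are bounded. *)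
Definition sum_over_finite (A : nat -> Prop) (f : nat -> R) : Prop :=
  exists M : R, forall l : list nat, NoDup l -> (forall n, In n l -> A n) ->
    lsum (map f l) <= M.

Definition pos_part (x : R) : R := Rmax x 0.
Definition neg_part (x : R) : R := Rmax (- x) 0.

From Stdlib Require Import Reals List Lra Lia Permutation Classical ClassicalEpsilon ZArith.
Open Scope R_scope.
Local Open Scope bool_scope.

(* A permutation supported in a set A only rearranges the restriction of x to A;
   when the sum of |x_n| over A is finite, that part is absolutely summable and the
   sum is unchanged.
   If instead the positive terms indexed by A have infinite sum, the sum can be
   lowered by any d >= 0. Fix a sparse sequence g 0 < g 1 < ... in A with
   sum_a |x (g a)| finite, and swap an index a of A with g a whenever x a is
   deferred. Terms are deferred greedily while the mass currently deferred is
   below d; as A carries mass at least d between consecutive g's and x_n -> 0, the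
   deferred mass tends to d. The partial sums of the rearrangement are those of x
   minus the deferred mass plus a tail of sum_a x (g a), so they tend to S - d.
   Raising the sum is symmetric, and since I is closed under unions the four
   cases are exhaustive and exclusive. *)

Fixpoint sumN (h : nat -> R) (n : nat) : R :=
  match n with O => 0 | S n => sumN h n + h n end.

Lemma sum_f_R0_sumN h N : sum_f_R0 h N = sumN h (S N).
Proof. induction N as [|N IH]; simpl in *; [ring | rewrite IH; reflexivity]. Qed.

Lemma sumN_ext h h' n : (forall a, (a < n)%nat -> h a = h' a) -> sumN h n = sumN h' n.
Proof.
  induction n as [|n IH]; intros H; simpl; [reflexivity|].
  rewrite IH by (intros; apply H; lia). rewrite (H n) by lia. reflexivity.
Qed.

Lemma sumN_plus h h' n : sumN (fun a => h a + h' a) n = sumN h n + sumN h' n.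
Proof. induction n; simpl; lra. Qed.

Lemma sumN_minus h h' n : sumN (fun a => h a - h' a) n = sumN h n - sumN h' n.
Proof. induction n; simpl; lra. Qed.

Lemma sumN_opp h n : sumN (fun a => - h a) n = - sumN h n.
Proof. induction n; simpl; lra. Qed.

Lemma sumN_le h h' n : (forall a, (a < n)%nat -> h a <= h' a) -> sumN h n <= sumN h' n.
Proof.
  induction n as [|n IH]; intros H; simpl; [lra|].
  assert (sumN h n <= sumN h' n) by (apply IH; intros; apply H; lia).
  assert (h n <= h' n) by (apply H; lia). lra.
Qed.

Lemma sumN_nonneg h n : (forall a, 0 <= h a) -> 0 <= sumN h n.
Proof. intros H; induction n; simpl; [lra|]. specialize (H n); lra. Qed.

Lemma sumN_abs h n : Rabs (sumN h n) <= sumN (fun a => Rabs (h a)) n.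
Proof.
  induction n; simpl; [rewrite Rabs_R0; lra|].
  eapply Rle_trans; [apply Rabs_triang | lra].
Qed.

Lemma sumN_mono h n m : (forall a, 0 <= h a) -> (n <= m)%nat -> sumN h n <= sumN h m.
Proof. intros H Hnm; induction Hnm; simpl; [lra|]. specialize (H m); lra. Qed.

Lemma sumN_zero h n : (forall a, (a < n)%nat -> h a = 0) -> sumN h n = 0.
Proof.
  intros H. rewrite (sumN_ext h (fun _ => 0)) by exact H.
  clear H. induction n; simpl; lra.
Qed.

Lemma sumN_single h a0 n : (forall a, a <> a0 -> h a = 0) -> (a0 < n)%nat -> sumN h n = h a0.
Proof.
  intros H Ha. induction n as [|n IH]; [lia|]. simpl.
  destruct (Nat.eq_dec a0 n) as [->|Hne].
  - rewrite sumN_zero; [lra|]. intros a Ha'. apply H; lia.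
  - rewrite IH, (H n) by lia. lra.
Qed.

Lemma sumN_prefix h k m : sumN (fun p => if Nat.ltb p k then h p else 0) m = sumN h (Nat.min m k).
Proof.
  induction m as [|m IH]; [destruct k; reflexivity|]. cbn [sumN].
  destruct (Nat.ltb_spec m k).
  - replace (Nat.min (S m) k) with (S m) by lia. replace (Nat.min m k) with m in IH by lia.
    cbn [sumN]. rewrite IH. reflexivity.
  - replace (Nat.min (S m) k) with (Nat.min m k) by lia. rewrite IH; lra.
Qed.

Lemma Un_cv_sum_f_R0_sumN h l : Un_cv (fun N => sum_f_R0 h N) l <-> Un_cv (sumN h) l.
Proof.
  split; intros H.
  - apply (CV_shift _ 1). apply (Un_cv_ext (fun N => sum_f_R0 h N)); [|exact H].
    intros N. rewrite sum_f_R0_sumN, Nat.add_1_r. reflexivity.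
  - apply (Un_cv_ext (fun N => sumN h (N + 1))); [|apply CV_shift'; exact H].
    intros N. rewrite sum_f_R0_sumN, Nat.add_1_r. reflexivity.
Qed.

Lemma cv_series_terms_0 x l : Un_cv (sumN x) l -> Un_cv x 0.
Proof.
  intros H. apply (Un_cv_ext (fun n => sumN x (n + 1) - sumN x n)).
  { intros n. rewrite Nat.add_1_r. simpl. ring. }
  replace 0 with (l - l) by ring. apply CV_minus; [apply CV_shift'|]; exact H.
Qed.

Lemma Un_cv_0_eventually_le x : Un_cv x 0 ->
  forall eps, 0 < eps -> exists N, forall n, (N <= n)%nat -> Rabs (x n) <= eps.
Proof.
  intros H eps Heps. destruct (H eps Heps) as [N HN]. exists N. intros n Hn.
  specialize (HN n Hn). unfold R_dist in HN. rewrite Rminus_0_r in HN. lra.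
Qed.

Lemma lsum_app l1 l2 : lsum (l1 ++ l2) = lsum l1 + lsum l2.
Proof. induction l1 as [|a l1 IH]; simpl; [lra | rewrite IH; lra]. Qed.

Lemma lsum_perm (f : nat -> R) l l' : Permutation l l' -> lsum (map f l) = lsum (map f l').
Proof. induction 1; simpl; lra. Qed.

Lemma lsum_map_plus (f g : nat -> R) l : lsum (map (fun a => f a + g a) l) = lsum (map f l) + lsum (map g l).
Proof. induction l; simpl; lra. Qed.

Lemma lsum_map_le (f g : nat -> R) l : (forall a, In a l -> f a <= g a) -> lsum (map f l) <= lsum (map g l).
Proof.
  induction l as [|a l IH]; simpl; intros H; [lra|].
  assert (lsum (map f l) <= lsum (map g l)) by (apply IH; auto).
  specialize (H a (or_introl eq_refl)). lra.
Qed.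

Lemma lsum_abs (f : nat -> R) l : Rabs (lsum (map f l)) <= lsum (map (fun n => Rabs (f n)) l).
Proof.
  induction l; simpl; [rewrite Rabs_R0; lra|].
  eapply Rle_trans; [apply Rabs_triang | lra].
Qed.

Lemma lsum_filter (f : nat -> R) (q : nat -> bool) l :
  lsum (map f l) = lsum (map f (filter q l)) + lsum (map f (filter (fun a => negb (q a)) l)).
Proof. induction l as [|a l IH]; simpl; [lra|]. destruct (q a); simpl; lra. Qed.

Lemma sumN_seq (h : nat -> R) K : sumN h K = lsum (map h (seq 0 K)).
Proof.
  induction K as [|K IH]; [reflexivity|]. cbn [sumN].
  rewrite seq_S, map_app, lsum_app, IH. simpl. ring.
Qed.

Lemma sumN_filter (f : nat -> R) (q : nat -> bool) m :
  sumN (fun p => if q p then f p else 0) m = lsum (map f (filter q (seq 0 m))).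
Proof.
  induction m as [|m IH]; [reflexivity|]. cbn [sumN].
  rewrite seq_S, filter_app, map_app, lsum_app, IH. simpl. destruct (q m); simpl; lra.
Qed.

Lemma list_upper_bound (l : list nat) : exists m, forall p, In p l -> (p < m)%nat.
Proof.
  induction l as [|a l [m Hm]]; [exists O; simpl; tauto|].
  exists (S (Nat.max a m)). intros p [->|Hp]; [lia|]. specialize (Hm p Hp); lia.
Qed.

Lemma lsum_le_sumN (f : nat -> R) (q : nat -> bool) m l :
  (forall n, 0 <= f n) -> NoDup l -> (forall p, In p l -> q p = true /\ (p < m)%nat) ->
  lsum (map f l) <= sumN (fun p => if q p then f p else 0) m.
Proof.
  intros Hf. revert l. induction m as [|m IH]; intros l Hnd Hl.
  - destruct l as [|p l]; simpl; [lra|]. destruct (Hl p (or_introl eq_refl)); lia.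
  - simpl. destruct (in_dec Nat.eq_dec m l) as [Hin|Hnin].
    + destruct (in_split _ _ Hin) as [l1 [l2 ->]].
      rewrite (lsum_perm f _ (m :: l1 ++ l2)) by (symmetry; apply Permutation_middle). simpl.
      assert (lsum (map f (l1 ++ l2)) <= sumN (fun p => if q p then f p else 0) m).
      { apply IH; [exact (NoDup_remove_1 _ _ _ Hnd)|].
        intros p Hp. assert (Hp' : In p (l1 ++ m :: l2)) by (apply in_app_or in Hp; apply in_or_app; simpl; tauto).
        destruct (Hl p Hp') as [H1 H2]. split; [exact H1|].
        assert (p <> m) by (intros ->; exact (NoDup_remove_2 _ _ _ Hnd Hp)). lia. }
      destruct (Hl m Hin) as [-> _]. lra.
    + assert (lsum (map f l) <= sumN (fun p => if q p then f p else 0) m).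
      { apply IH; [exact Hnd|]. intros p Hp. destruct (Hl p Hp) as [H1 H2]. split; [exact H1|].
        assert (p <> m) by (intros ->; tauto). lia. }
      destruct (q m); [specialize (Hf m)|]; lra.
Qed.

Definition decide (P : nat -> Prop) (n : nat) : bool :=
  if excluded_middle_informative (P n) then true else false.

Lemma decide_true P n : decide P n = true <-> P n.
Proof. unfold decide; destruct excluded_middle_informative; split; intros; congruence || tauto. Qed.

Lemma decide_false P n : decide P n = false <-> ~ P n.
Proof. rewrite <- Bool.not_true_iff_false, decide_true. tauto. Qed.

Definition restrict (P : nat -> Prop) (f : nat -> R) (p : nat) : R :=
  if decide P p then f p else 0.

Lemma restrict_nonneg P f : (forall n, P n -> 0 <= f n) -> forall n, 0 <= restrict P f n.
Proof.
  intros Hf n. unfold restrict. destruct (decide P n) eqn:E; [apply Hf, decide_true, E | lra].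
Qed.

Lemma sum_over_finite_iff_sumN_bounded (A : nat -> Prop) f : (forall n, 0 <= f n) ->
  (sum_over_finite A f <-> exists M, forall m, sumN (restrict A f) m <= M).
Proof.
  intros Hf; split; intros [M HM]; exists M.
  - intros m. unfold restrict. rewrite sumN_filter. apply HM.
    + apply NoDup_filter, seq_NoDup.
    + intros n Hn. apply filter_In in Hn. apply decide_true; tauto.
  - intros l Hnd Hl. destruct (list_upper_bound l) as [m Hm].
    eapply Rle_trans; [|apply (HM m)]. apply lsum_le_sumN; auto.
    intros p Hp; split; [apply decide_true|]; auto.
Qed.

Lemma sum_over_finite_subset A B f : subset_of B A -> sum_over_finite A f -> sum_over_finite B f.
Proof. intros HBA [M HM]. exists M. intros l Hnd Hl. apply HM; auto. Qed.

Lemma sum_over_finite_le A f g : (forall n, f n <= g n) -> sum_over_finite A g -> sum_over_finite A f.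
Proof.
  intros Hfg [M HM]. exists M. intros l Hnd Hl.
  eapply Rle_trans; [|apply (HM l Hnd Hl)]. apply lsum_map_le; auto.
Qed.

Lemma pos_part_nonneg r : 0 <= pos_part r.
Proof. unfold pos_part, Rmax; destruct Rle_dec; lra. Qed.

Lemma neg_part_nonneg r : 0 <= neg_part r.
Proof. unfold neg_part, Rmax; destruct Rle_dec; lra. Qed.

Lemma Rabs_pos_neg_part r : Rabs r = pos_part r + neg_part r.
Proof. unfold pos_part, neg_part, Rmax, Rabs. repeat destruct Rle_dec; destruct Rcase_abs; lra. Qed.

Lemma sum_over_finite_abs A x :
  sum_over_finite A (fun n => pos_part (x n)) -> sum_over_finite A (fun n => neg_part (x n)) ->
  sum_over_finite A (fun n => Rabs (x n)).
Proof.
  intros [M1 H1] [M2 H2]. exists (M1 + M2). intros l Hnd Hl.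
  rewrite (map_ext _ (fun n => pos_part (x n) + neg_part (x n))) by (intros; apply Rabs_pos_neg_part).
  rewrite lsum_map_plus. specialize (H1 l Hnd Hl). specialize (H2 l Hnd Hl). lra.
Qed.

Lemma sum_over_finite_pos_of_abs A x :
  sum_over_finite A (fun n => Rabs (x n)) -> sum_over_finite A (fun n => pos_part (x n)).
Proof. apply sum_over_finite_le. intros n. rewrite Rabs_pos_neg_part. pose proof (neg_part_nonneg (x n)). lra. Qed.

Lemma sum_over_finite_neg_of_abs A x :
  sum_over_finite A (fun n => Rabs (x n)) -> sum_over_finite A (fun n => neg_part (x n)).
Proof. apply sum_over_finite_le. intros n. rewrite Rabs_pos_neg_part. pose proof (pos_part_nonneg (x n)). lra. Qed.

Definition sum_from (h : nat -> R) (k m : nat) : R := sumN (fun p => if Nat.leb k p then h p else 0) m.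

Lemma sumN_split_at h k m : sumN h m = sumN h (Nat.min m k) + sum_from h k m.
Proof.
  unfold sum_from. rewrite <- sumN_prefix, <- sumN_plus. apply sumN_ext. intros a _.
  destruct (Nat.ltb_spec a k), (Nat.leb_spec k a); try lia; lra.
Qed.

Lemma sum_from_nonneg h k m : (forall n, 0 <= h n) -> 0 <= sum_from h k m.
Proof. intros Hh. apply sumN_nonneg. intros a. destruct (Nat.leb k a); [apply Hh | lra]. Qed.

Lemma sum_from_mono h k m m' : (forall n, 0 <= h n) -> (m <= m')%nat -> sum_from h k m <= sum_from h k m'.
Proof. intros Hh. apply sumN_mono. intros a. destruct (Nat.leb k a); [apply Hh | lra]. Qed.

Lemma sum_from_unbounded h : (forall n, 0 <= h n) -> ~ (exists M, forall m, sumN h m <= M) ->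
  forall k M, exists m, M <= sum_from h k m.
Proof.
  intros Hh Hunb k M. apply NNPP. intros Hsmall. apply Hunb.
  exists (sumN h k + M). intros m. rewrite (sumN_split_at h k m).
  assert (sumN h (Nat.min m k) <= sumN h k) by (apply sumN_mono; auto; lia).
  assert (sum_from h k m < M) by (apply Rnot_le_lt; intros Hbig; apply Hsmall; eauto).
  lra.
Qed.

Lemma restrict_pos_part A x n :
  restrict A (fun n => pos_part (x n)) n = restrict (fun n => A n /\ 0 < x n) x n.
Proof.
  unfold restrict, pos_part, Rmax.
  destruct (decide A n) eqn:E1, (decide (fun n => A n /\ 0 < x n) n) eqn:E2.
  - apply decide_true in E2. destruct Rle_dec; lra.
  - apply decide_true in E1. apply decide_false in E2.
    destruct Rle_dec; [reflexivity | exfalso; apply E2; split; [exact E1 | lra]].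
  - apply decide_false in E1. apply decide_true in E2. tauto.
  - reflexivity.
Qed.

Lemma sum_from_unbounded_of_pos_div A x : ~ sum_over_finite A (fun n => pos_part (x n)) ->
  forall k M, exists m, M <= sum_from (restrict (fun n => A n /\ 0 < x n) x) k m.
Proof.
  intros Hdiv. apply sum_from_unbounded.
  - apply restrict_nonneg. intros n [_ Hn]. lra.
  - intros [M HM]. apply Hdiv, sum_over_finite_iff_sumN_bounded; [intros; apply pos_part_nonneg|].
    exists M. intros m. rewrite (sumN_ext _ (restrict (fun n => A n /\ 0 < x n) x)); [apply HM|].
    intros a _. apply restrict_pos_part.
Qed.

(** * Lowering the sum by deferring positive terms *)

Definition tele_weight (a : nat) : R := / (INR a + 1) - / (INR a + 2).

Lemma tele_weight_pos a : 0 < tele_weight a.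
Proof.
  unfold tele_weight. pose proof (pos_INR a).
  apply Rlt_0_minus, Rinv_lt_contravar; nra.
Qed.

Lemma tele_weight_tail K0 K : sum_from tele_weight K0 K <= / (INR K0 + 1).
Proof.
  assert (Htele : sum_from tele_weight K0 K =
    if Nat.leb K K0 then 0 else / (INR K0 + 1) - / (INR K + 1)).
  { unfold sum_from. induction K as [|K IH]; [reflexivity|]. cbn [sumN]. rewrite IH.
    unfold tele_weight. rewrite S_INR. replace (INR K + 1 + 1) with (INR K + 2) by ring.
    destruct (Nat.leb_spec K K0), (Nat.leb_spec (S K) K0), (Nat.leb_spec K0 K); try lia.
    - lra.
    - replace K0 with K by lia. lra.
    - lra. }
  rewrite Htele. pose proof (pos_INR K0). pose proof (pos_INR K).
  assert (0 < / (INR K + 1)) by (apply Rinv_0_lt_compat; lra).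
  assert (0 < / (INR K0 + 1)) by (apply Rinv_0_lt_compat; lra).
  destruct (Nat.leb K K0); lra.
Qed.

Section Deferral.

Variables (x : nat -> R) (P : nat -> Prop) (d : R) (g : nat -> nat).
Hypothesis x_pos_on_P : forall n, P n -> 0 < x n.
Hypothesis d_nonneg : 0 <= d.
Hypothesis x_cv_0 : Un_cv x 0.
Hypothesis g_in_P : forall a, P (g a).
Hypothesis g_gt : forall a, (a < g a)%nat.
Hypothesis g_incr : forall a, (g a < g (S a))%nat.
Hypothesis g_small : forall a, Rabs (x (g a)) <= tele_weight a.
Hypothesis g_gap_mass : forall a, d <= sum_from (restrict P x) (S (g a)) (g (S a)).

Lemma g_lt_mono a b : (a < b)%nat -> (g a < g b)%nat.
Proof. intros H; induction H as [|b _ IH]; [apply g_incr|]. specialize (g_incr b); lia. Qed.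

Lemma g_inj a b : g a = g b -> a = b.
Proof.
  intros H. destruct (Nat.lt_trichotomy a b) as [Hl|[Hl|Hl]]; [|exact Hl|];
    apply g_lt_mono in Hl; lia.
Qed.

Lemma g_lt_reflect a b : (g a < g b)%nat -> (a < b)%nat.
Proof.
  intros H. destruct (Nat.lt_ge_cases a b) as [Hl|Hl]; [exact Hl|].
  destruct (Nat.eq_dec a b) as [->|Hne]; [lia|].
  assert (g b < g a)%nat by (apply g_lt_mono; lia). lia.
Qed.

Lemma not_in_range_g_between a K : (g a < K < g (S a))%nat -> ~ exists b, g b = K.
Proof.
  intros HK [b <-]. destruct (Nat.lt_trichotomy b (S a)) as [Hb|[->|Hb]]; [|lia|].
  - destruct (Nat.eq_dec b a) as [->|Hne]; [lia|].
    assert (g b < g a)%nat by (apply g_lt_mono; lia). lia.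
  - assert (g (S a) < g b)%nat by (apply g_lt_mono; lia). lia.
Qed.

(* [pending sel h K] sums [h a] over the terms [a < K] selected by [sel] whose
   partner [g a] has not been reached yet. *)
Definition pending (sel : nat -> bool) (h : nat -> R) (K : nat) : R :=
  sumN (fun a => if sel a && Nat.leb K (g a) then h a else 0) K.

Definition decision (K : nat) (sel : nat -> bool) : bool :=
  decide P K && negb (decide (fun K => exists a, g a = K) K)
  && (if Rlt_dec (pending sel x K) d then true else false).

Fixpoint decisions (K : nat) : nat -> bool :=
  match K with
  | O => fun _ => false
  | S K' => fun a => if Nat.eqb a K' then decision K' (decisions K') else decisions K' a
  end.

(* The term [x a] is deferred to position [g a] exactly when [chosen a]: the
   greedy rule defers terms of [P] as long as the deferred mass is below [d]. *)
Definition chosen (a : nat) : bool := decisions (S a) a.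

Definition deferred (h : nat -> R) (K : nat) : R := pending chosen h K.

Lemma decisions_chosen K a : decisions K a = if Nat.ltb a K then chosen a else false.
Proof.
  induction K as [|K IH]; [destruct (Nat.ltb_spec a 0); [lia | reflexivity]|].
  cbn [decisions]. destruct (Nat.eqb_spec a K) as [->|Hne].
  - unfold chosen. simpl. rewrite Nat.eqb_refl. destruct (Nat.ltb_spec K (S K)); [reflexivity | lia].
  - rewrite IH. destruct (Nat.ltb_spec a K), (Nat.ltb_spec a (S K)); try lia; reflexivity.
Qed.

Lemma chosen_decision K : chosen K = decision K chosen.
Proof.
  unfold chosen at 1. simpl. rewrite Nat.eqb_refl. unfold decision.
  replace (pending (decisions K) x K) with (pending chosen x K); [reflexivity|].
  apply sumN_ext. intros a Ha. rewrite decisions_chosen.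
  destruct (Nat.ltb_spec a K); [reflexivity | lia].
Qed.

Lemma chosen_spec K : chosen K = true <-> P K /\ ~ (exists a, g a = K) /\ deferred x K < d.
Proof.
  rewrite chosen_decision. unfold decision. fold (deferred x K).
  rewrite !Bool.andb_true_iff, Bool.negb_true_iff, decide_true, decide_false.
  destruct (Rlt_dec (deferred x K) d); split; intros H; try tauto; try discriminate. lra.
Qed.

Lemma chosen_in_P a : chosen a = true -> P a.
Proof. intros H; apply chosen_spec in H; tauto. Qed.

Lemma chosen_not_g a b : chosen a = true -> g b <> a.
Proof. intros H He; apply chosen_spec in H. destruct H as [_ [H _]]. eauto. Qed.

Definition released (h : nat -> R) (K : nat) : R :=
  sumN (fun a => if chosen a && Nat.eqb (g a) K then h a else 0) K.

Lemma deferred_step h K :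
  deferred h (S K) = deferred h K - released h K + (if chosen K then h K else 0).
Proof.
  unfold deferred, pending, released. cbn [sumN]. rewrite <- sumN_minus.
  replace (Nat.leb (S K) (g K)) with true by (symmetry; apply Nat.leb_le, g_gt).
  rewrite Bool.andb_true_r. f_equal. apply sumN_ext. intros a _.
  destruct (chosen a); cbn [andb]; [|lra].
  destruct (Nat.leb_spec (S K) (g a)), (Nat.leb_spec K (g a)), (Nat.eqb_spec (g a) K);
    try lia; lra.
Qed.

Lemma released_not_in_range h K : ~ (exists a, g a = K) -> released h K = 0.
Proof.
  intros H. apply sumN_zero. intros a _.
  destruct (Nat.eqb_spec (g a) K); [exfalso; eauto|]. rewrite Bool.andb_false_r. reflexivity.
Qed.

Lemma released_g h a0 : released h (g a0) = if chosen a0 then h a0 else 0.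
Proof.
  unfold released. rewrite (sumN_single _ a0).
  - rewrite Nat.eqb_refl, Bool.andb_true_r. reflexivity.
  - intros a Ha. destruct (Nat.eqb_spec (g a) (g a0)) as [E|]; [exfalso; apply Ha, g_inj, E|].
    rewrite Bool.andb_false_r. reflexivity.
  - apply g_gt.
Qed.

Definition g_inv (n : nat) : option nat :=
  match excluded_middle_informative (exists a, g a = n) with
  | left H => Some (proj1_sig (constructive_indefinite_description _ H))
  | right _ => None
  end.

Lemma g_inv_Some n a : g_inv n = Some a -> g a = n.
Proof.
  unfold g_inv. destruct excluded_middle_informative as [H|H]; [|discriminate].
  destruct constructive_indefinite_description; simpl. congruence.
Qed.

Lemma g_inv_None n : g_inv n = None -> ~ exists a, g a = n.
Proof. unfold g_inv. destruct excluded_middle_informative; [discriminate | auto]. Qed.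

Lemma g_inv_g a : g_inv (g a) = Some a.
Proof.
  destruct (g_inv (g a)) as [b|] eqn:E.
  - apply g_inv_Some, g_inj in E. subst. reflexivity.
  - apply g_inv_None in E. exfalso; eauto.
Qed.

Definition swap (n : nat) : nat :=
  if chosen n then g n
  else match g_inv n with Some a => if chosen a then a else n | None => n end.

Lemma swap_involutive n : swap (swap n) = n.
Proof.
  unfold swap at 2. destruct (chosen n) eqn:E.
  - unfold swap. destruct (chosen (g n)) eqn:E2; [exfalso; eapply chosen_not_g; eauto|].
    rewrite g_inv_g, E. reflexivity.
  - destruct (g_inv n) as [a|] eqn:E2; [destruct (chosen a) eqn:E3|].
    + apply g_inv_Some in E2. unfold swap. rewrite E3. exact E2.
    + unfold swap. rewrite E, E2, E3. reflexivity.
    + unfold swap. rewrite E, E2. reflexivity.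
Qed.

Lemma swap_is_perm : is_perm swap.
Proof.
  split.
  - intros m n H. rewrite <- (swap_involutive m), <- (swap_involutive n), H. reflexivity.
  - intros m. exists (swap m). apply swap_involutive.
Qed.

Lemma supp_swap n : supp swap n -> P n.
Proof.
  unfold supp, swap. destruct (chosen n) eqn:E; [intros _; apply chosen_in_P, E|].
  destruct (g_inv n) as [a|] eqn:E2; [|tauto]. destruct (chosen a); [|tauto].
  intros _. apply g_inv_Some in E2. subst. apply g_in_P.
Qed.

Lemma sumN_swap K : sumN (fun n => x (swap n)) K = sumN x K + deferred (fun a => x (g a)) K - deferred x K.
Proof.
  induction K as [|K IH]; [unfold deferred, pending; simpl; ring|].
  cbn [sumN]. rewrite IH, !deferred_step.
  destruct (chosen K) eqn:E.
  - assert (~ exists a, g a = K) by (intros [a Ha]; eapply chosen_not_g; eauto).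
    rewrite !released_not_in_range by assumption. unfold swap. rewrite E. ring.
  - destruct (g_inv K) as [a|] eqn:E2.
    + apply g_inv_Some in E2 as Hg. subst K. rewrite !released_g.
      unfold swap. rewrite E, g_inv_g. destruct (chosen a); ring.
    + apply g_inv_None in E2 as Hn. rewrite !released_not_in_range by assumption.
      unfold swap. rewrite E, E2. ring.
Qed.

Lemma deferred_nonneg K : 0 <= deferred x K.
Proof.
  apply sumN_nonneg. intros a. destruct (chosen a) eqn:E; cbn [andb]; [|lra].
  destruct (Nat.leb _ _); [apply Rlt_le, x_pos_on_P, chosen_in_P, E | lra].
Qed.

Lemma released_nonneg K : 0 <= released x K.
Proof.
  apply sumN_nonneg. intros a. destruct (chosen a) eqn:E; cbn [andb]; [|lra].
  destruct (Nat.eqb _ _); [apply Rlt_le, x_pos_on_P, chosen_in_P, E | lra].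
Qed.

(* A term is only deferred while the deferred mass is below [d]. *)
Lemma deferred_le_or_none_chosen eps K0 : (forall n, (K0 <= n)%nat -> Rabs (x n) <= eps) ->
  forall m, deferred x (K0 + m) <= d + eps \/ (forall a, (K0 <= a < K0 + m)%nat -> chosen a = false).
Proof.
  intros Heps m. induction m as [|m IH]; [right; intros; lia|].
  rewrite Nat.add_succ_r, deferred_step. pose proof (released_nonneg (K0 + m)).
  destruct (chosen (K0 + m)) eqn:E.
  - left. apply chosen_spec in E. destruct E as [_ [_ E]].
    specialize (Heps (K0 + m)%nat ltac:(lia)). pose proof (Rle_abs (x (K0 + m)%nat)). lra.
  - destruct IH as [IH|IH]; [left; lra | right]. intros a Ha.
    destruct (Nat.eq_dec a (K0 + m)) as [->|]; [exact E | apply IH; lia].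
Qed.

Lemma deferred_eventually_le eps : 0 < eps -> exists N, forall K, (N <= K)%nat -> deferred x K <= d + eps.
Proof.
  intros Heps. destruct (Un_cv_0_eventually_le x x_cv_0 eps Heps) as [K0 HK0].
  exists (Nat.max K0 (g K0)). intros K HK.
  destruct (deferred_le_or_none_chosen eps K0 HK0 (K - K0)) as [H|H];
    replace (K0 + (K - K0))%nat with K in H by lia; [exact H|].
  assert (deferred x K = 0).
  { apply sumN_zero. intros a Ha. destruct (Nat.lt_ge_cases a K0).
    - assert (g a < g K0)%nat by (apply g_lt_mono; assumption).
      destruct (Nat.leb_spec K (g a)); [lia|]. rewrite Bool.andb_false_r. reflexivity.
    - rewrite H by lia. reflexivity. }
  lra.
Qed.

Lemma deferred_fill L m : (forall K, (L <= K < L + m)%nat -> ~ exists a, g a = K) ->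
  Rmin d (deferred x L + sum_from (restrict P x) L (L + m)) <= deferred x (L + m).
Proof.
  induction m as [|m IH]; intros Hfree.
  - rewrite Nat.add_0_r. unfold sum_from. rewrite sumN_zero.
    + rewrite Rplus_0_r. apply Rmin_r.
    + intros a Ha. destruct (Nat.leb_spec L a); [lia | reflexivity].
  - specialize (IH (fun K HK => Hfree K ltac:(lia))).
    rewrite Nat.add_succ_r, deferred_step, released_not_in_range by (apply Hfree; lia).
    unfold sum_from in *. cbn [sumN].
    replace (Nat.leb L (L + m)) with true by (symmetry; apply Nat.leb_le; lia).
    set (K := (L + m)%nat) in *. unfold restrict at 2. destruct (decide P K) eqn:EP.
    + destruct (Rlt_dec (deferred x K) d) as [Hlt|Hge].
      * assert (chosen K = true).
        { apply chosen_spec. split; [apply decide_true, EP|]. split; [apply Hfree; lia | exact Hlt]. }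
        rewrite H. revert IH. unfold Rmin. destruct Rle_dec, Rle_dec; intros; lra.
      * assert (chosen K = false) as ->.
        { destruct (chosen K) eqn:E; [apply chosen_spec in E; lra | reflexivity]. }
        pose proof (Rmin_l d (deferred x L + (sumN (fun p => if L <=? p then restrict P x p else 0) K + x K))).
        lra.
    + assert (chosen K = false) as ->.
      { destruct (chosen K) eqn:E; [|reflexivity]. apply chosen_in_P, decide_true in E. congruence. }
      rewrite !Rplus_0_r. lra.
Qed.

Lemma deferred_ge_at_g a : d <= deferred x (g (S a)).
Proof.
  pose proof (deferred_fill (S (g a)) (g (S a) - S (g a))) as H.
  replace (S (g a) + (g (S a) - S (g a)))%nat with (g (S a)) in H by (specialize (g_incr a); lia).
  eapply Rle_trans; [|apply H].
  - pose proof (g_gap_mass a). pose proof (deferred_nonneg (S (g a))).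
    unfold Rmin. destruct Rle_dec; lra.
  - intros K HK. apply (not_in_range_g_between a). lia.
Qed.

Lemma deferred_ge_after_g a : d - Rabs (x (S a)) <= deferred x (S (g (S a))).
Proof.
  rewrite deferred_step, released_g.
  destruct (chosen (g (S a))) eqn:E; [exfalso; eapply chosen_not_g; eauto|].
  pose proof (deferred_ge_at_g a). pose proof (Rle_abs (x (S a))). pose proof (Rabs_pos (x (S a))).
  destruct (chosen (S a)); lra.
Qed.

Lemma g_bracket K : (S (g 1) <= K)%nat -> exists a, (1 <= a)%nat /\ (S (g a) <= K <= g (S a))%nat.
Proof.
  intros HK. induction HK as [|K _ [a [Ha1 Ha2]]].
  - exists 1%nat. specialize (g_incr 1). lia.
  - destruct (Nat.eq_dec K (g (S a))) as [->|].
    + exists (S a). specialize (g_incr (S a)). lia.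
    + exists a. lia.
Qed.

Lemma deferred_eventually_ge eps : 0 < eps -> exists N, forall K, (N <= K)%nat -> d - eps <= deferred x K.
Proof.
  intros Heps. destruct (Un_cv_0_eventually_le x x_cv_0 eps Heps) as [K0 HK0].
  exists (S (g (S K0))). intros K HK.
  assert (HK1 : (S (g 1) <= K)%nat).
  { assert (g 1 <= g (S K0))%nat by (destruct K0; [lia | apply Nat.lt_le_incl, g_lt_mono; lia]). lia. }
  destruct (g_bracket K HK1) as [[|a] [Ha1 Ha2]]; [lia|].
  assert (Ha : (K0 <= a)%nat) by (assert (g (S K0) < g (S (S a)))%nat as H by lia; apply g_lt_reflect in H; lia).
  pose proof (deferred_fill (S (g (S a))) (K - S (g (S a)))) as H.
  replace (S (g (S a)) + (K - S (g (S a))))%nat with K in H by lia.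
  specialize (H (fun K' HK' => not_in_range_g_between (S a) K' ltac:(lia))).
  pose proof (deferred_ge_after_g a).
  pose proof (sum_from_nonneg (restrict P x) (S (g (S a))) K
                (restrict_nonneg P x (fun n Hn => Rlt_le _ _ (x_pos_on_P n Hn)))).
  specialize (HK0 (S a) ltac:(lia)).
  assert (d - eps <= Rmin d (deferred x (S (g (S a))) + sum_from (restrict P x) (S (g (S a))) K)).
  { unfold Rmin. destruct Rle_dec; lra. }
  lra.
Qed.

Lemma deferred_cv : Un_cv (deferred x) d.
Proof.
  intros eps Heps.
  destruct (deferred_eventually_le (eps / 2)) as [N1 H1]; [lra|].
  destruct (deferred_eventually_ge (eps / 2)) as [N2 H2]; [lra|].
  exists (Nat.max N1 N2). intros n Hn. unfold R_dist.
  specialize (H1 n ltac:(lia)). specialize (H2 n ltac:(lia)). apply Rabs_def1; lra.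
Qed.

Lemma deferred_g_cv_0 : Un_cv (deferred (fun a => x (g a))) 0.
Proof.
  intros eps Heps. destruct (archimed (/ eps)) as [Hup _].
  assert (0 < / eps) by (apply Rinv_0_lt_compat; exact Heps).
  assert (Hz : (0 <= up (/ eps))%Z) by (apply le_IZR; lra).
  set (K0 := Z.to_nat (up (/ eps))).
  assert (HK0 : / eps < INR K0 + 1) by (unfold K0; rewrite INR_IZR_INZ, Z2Nat.id by exact Hz; lra).
  exists (g K0). intros K HK. unfold R_dist. rewrite Rminus_0_r.
  eapply Rle_lt_trans; [apply sumN_abs|].
  eapply Rle_lt_trans; [apply (sumN_le _ (fun a => if Nat.leb K0 a then tele_weight a else 0))|].
  - intros a Ha. destruct (chosen a && Nat.leb K (g a)) eqn:E.
    + apply Bool.andb_true_iff in E as [_ E]. apply Nat.leb_le in E.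
      destruct (Nat.leb_spec K0 a); [apply g_small|].
      assert (g a < g K0)%nat by (apply g_lt_mono; assumption). lia.
    + rewrite Rabs_R0. destruct (Nat.leb K0 a); [apply Rlt_le, tele_weight_pos | lra].
  - eapply Rle_lt_trans; [apply tele_weight_tail|]. pose proof (pos_INR K0).
    rewrite <- (Rinv_inv eps). apply Rinv_lt_contravar; [apply Rmult_lt_0_compat|]; lra.
Qed.

Lemma sumN_swap_cv S : Un_cv (sumN x) S -> Un_cv (sumN (fun n => x (swap n))) (S - d).
Proof.
  intros Hcv. apply (Un_cv_ext (fun K => sumN x K + deferred (fun a => x (g a)) K - deferred x K)).
  { intros K. symmetry. apply sumN_swap. }
  replace (S - d) with (S + 0 - d) by ring.
  apply CV_minus; [apply CV_plus|]; [exact Hcv | exact deferred_g_cv_0 | exact deferred_cv].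
Qed.

End Deferral.

Section Schedule.

Variables (x : nat -> R) (P : nat -> Prop) (d : R).
Hypothesis x_pos_on_P : forall n, P n -> 0 < x n.
Hypothesis P_mass_unbounded : forall k M, exists m, M <= sum_from (restrict P x) k m.
Hypothesis x_cv_0 : Un_cv x 0.

Lemma P_unbounded k : exists p, (k <= p)%nat /\ P p.
Proof.
  apply NNPP. intros Hnone. destruct (P_mass_unbounded k 1) as [m Hm].
  enough (sum_from (restrict P x) k m = 0) by lra.
  apply sumN_zero. intros a _. destruct (Nat.leb_spec k a); [|reflexivity].
  unfold restrict. destruct (decide P a) eqn:E; [|reflexivity].
  apply decide_true in E. exfalso; eauto.
Qed.

Lemma next_slot_exists k a : exists m, P m /\ (k < m)%nat /\ (a < m)%nat /\
  Rabs (x m) <= tele_weight a /\ d <= sum_from (restrict P x) (S k) m.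
Proof.
  destruct (P_mass_unbounded (S k) d) as [m1 Hm1].
  destruct (Un_cv_0_eventually_le x x_cv_0 _ (tele_weight_pos a)) as [N HN].
  destruct (P_unbounded (Nat.max (Nat.max m1 N) (S (Nat.max k a)))) as [p [Hp HPp]].
  exists p. repeat split; [exact HPp | lia | lia | apply HN; lia |].
  eapply Rle_trans; [exact Hm1|]. apply sum_from_mono; [|lia].
  apply restrict_nonneg. intros n Hn. apply Rlt_le, x_pos_on_P, Hn.
Qed.

Definition next_slot (k a : nat) : nat :=
  proj1_sig (constructive_indefinite_description _ (next_slot_exists k a)).

Lemma next_slot_spec k a : P (next_slot k a) /\ (k < next_slot k a)%nat /\ (a < next_slot k a)%nat /\
  Rabs (x (next_slot k a)) <= tele_weight a /\ d <= sum_from (restrict P x) (S k) (next_slot k a).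
Proof. unfold next_slot. destruct constructive_indefinite_description; simpl; assumption. Qed.

Fixpoint slot (a : nat) : nat :=
  match a with O => next_slot 0 0 | S a' => next_slot (slot a') (S a') end.

Lemma slot_spec :
  (forall a, P (slot a)) /\ (forall a, (a < slot a)%nat) /\ (forall a, (slot a < slot (S a))%nat) /\
  (forall a, Rabs (x (slot a)) <= tele_weight a) /\
  (forall a, d <= sum_from (restrict P x) (S (slot a)) (slot (S a))).
Proof. repeat split; intros [|a]; apply next_slot_spec. Qed.

End Schedule.

Lemma rearrangement_lowering (x : nat -> R) (P : nat -> Prop) S d :
  Un_cv (sumN x) S -> (forall n, P n -> 0 < x n) ->
  (forall k M, exists m, M <= sum_from (restrict P x) k m) -> 0 <= d ->
  exists s, is_perm s /\ (forall n, supp s n -> P n) /\ Un_cv (sumN (fun n => x (s n))) (S - d).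
Proof.
  intros Hcv Hpos Hmass Hd. pose proof (cv_series_terms_0 x S Hcv) as Hx0.
  destruct (slot_spec x P d Hpos Hmass Hx0) as [H1 [H2 [H3 [H4 H5]]]].
  set (g := slot x P d Hpos Hmass Hx0) in *.
  exists (swap x P d g). split; [|split].
  - apply swap_is_perm; assumption.
  - apply supp_swap; assumption.
  - apply sumN_swap_cv; assumption.
Qed.

Lemma rearrangement_raising (x : nat -> R) (P : nat -> Prop) S d :
  Un_cv (sumN x) S -> (forall n, P n -> 0 < - x n) ->
  (forall k M, exists m, M <= sum_from (restrict P (fun n => - x n)) k m) -> 0 <= d ->
  exists s, is_perm s /\ (forall n, supp s n -> P n) /\ Un_cv (sumN (fun n => x (s n))) (S + d).
Proof.
  intros Hcv Hpos Hmass Hd.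
  destruct (rearrangement_lowering (fun n => - x n) P (- S) d) as [s [Hs [Hsupp Hscv]]]; try assumption.
  { apply (Un_cv_ext (opp_seq (sumN x))); [intros; symmetry; apply sumN_opp | apply CV_opp, Hcv]. }
  exists s. split; [exact Hs | split; [exact Hsupp|]].
  replace (S + d) with (- (- S - d)) by ring.
  apply (Un_cv_ext (opp_seq (sumN (fun n => - x (s n))))); [|apply CV_opp, Hscv].
  intros N. unfold opp_seq. rewrite sumN_opp. ring.
Qed.

(** * Rearranging an absolutely summable part *)

Lemma lsum_tail_small (z : nat -> R) M : (forall m, sumN (fun n => Rabs (z n)) m <= M) ->
  forall eps, 0 < eps -> exists K1, forall l, NoDup l -> (forall p, In p l -> (K1 <= p)%nat) ->
    lsum (map (fun n => Rabs (z n)) l) < eps.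
Proof.
  intros HM eps Heps. set (U := sumN (fun n => Rabs (z n))).
  assert (Hgrow : Un_growing U) by (intros n; unfold U; simpl; pose proof (Rabs_pos (z n)); lra).
  assert (Hub : has_ub U) by (exists M; intros r [i ->]; apply HM).
  destruct (growing_cv U Hgrow Hub) as [L HL]. destruct (HL eps Heps) as [K1 HK1].
  exists K1. intros l Hnd Hl. destruct (list_upper_bound l) as [m Hm].
  assert (HUK1 : L - U K1 < eps).
  { specialize (HK1 K1 (le_n _)). unfold R_dist in HK1. apply Rabs_def2 in HK1. lra. }
  assert (HUm : U (Nat.max m K1) <= L) by (apply growing_ineq; assumption).
  pose proof (sumN_split_at (fun n => Rabs (z n)) K1 (Nat.max m K1)) as Hsplit.
  replace (Nat.min (Nat.max m K1) K1) with K1 in Hsplit by lia. fold U in Hsplit.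
  eapply Rle_lt_trans; [apply (lsum_le_sumN _ (fun p => Nat.leb K1 p) (Nat.max m K1)) | unfold sum_from in Hsplit; lra].
  - intros; apply Rabs_pos.
  - exact Hnd.
  - intros p Hp. split; [apply Nat.leb_le, Hl, Hp|]. specialize (Hm p Hp); lia.
Qed.

Lemma perm_preimages_bounded (s : nat -> nat) : is_perm s ->
  forall K1, exists N0, forall j, (j < K1)%nat -> exists n, (n < N0)%nat /\ s n = j.
Proof.
  intros [_ Hsur] K1. induction K1 as [|K1 [N0 HN0]]; [exists O; intros; lia|].
  destruct (Hsur K1) as [nj Hnj]. exists (Nat.max N0 (S nj)). intros j Hj.
  destruct (Nat.eq_dec j K1) as [->|Hne]; [exists nj; split; [lia | exact Hnj]|].
  destruct (HN0 j ltac:(lia)) as [n [Hn1 Hn2]]. exists n; split; [lia | exact Hn2].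
Qed.

Lemma Permutation_map_perm_prefix (s : nat -> nat) K1 K : is_perm s -> (K1 <= K)%nat ->
  (forall j, (j < K1)%nat -> exists n, (n < K)%nat /\ s n = j) ->
  Permutation (map s (filter (fun n => Nat.ltb (s n) K1) (seq 0 K))) (filter (fun n => Nat.ltb n K1) (seq 0 K)).
Proof.
  intros [Hinj _] HK Hpre. apply NoDup_Permutation.
  - apply NoDup_map_NoDup_ForallPairs; [intros a b _ _; apply Hinj|]. apply NoDup_filter, seq_NoDup.
  - apply NoDup_filter, seq_NoDup.
  - intros j. rewrite in_map_iff, filter_In, in_seq, Nat.ltb_lt. split.
    + intros [n [<- Hn]]. apply filter_In in Hn as [_ Hn]. apply Nat.ltb_lt in Hn.
      split; [lia | exact Hn].
    + intros [_ Hj]. destruct (Hpre j Hj) as [n [Hn <-]]. exists n. split; [reflexivity|].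
      apply filter_In. split; [apply in_seq; lia | apply Nat.ltb_lt, Hj].
Qed.

Lemma sumN_perm_minus_cv_0 (z : nat -> R) M (s : nat -> nat) : is_perm s ->
  (forall m, sumN (fun n => Rabs (z n)) m <= M) ->
  Un_cv (fun K => sumN (fun n => z (s n)) K - sumN z K) 0.
Proof.
  intros Hs HM eps Heps. destruct (lsum_tail_small z M HM (eps / 2)) as [K1 HK1]; [lra|].
  destruct (perm_preimages_bounded s Hs K1) as [N0 HN0].
  exists (Nat.max N0 K1). intros K HK. unfold R_dist. rewrite Rminus_0_r.
  set (far_s := filter (fun n => negb (Nat.ltb (s n) K1)) (seq 0 K)).
  set (far := filter (fun n => negb (Nat.ltb n K1)) (seq 0 K)).
  assert (Hnear : Permutation (map s (filter (fun n => Nat.ltb (s n) K1) (seq 0 K)))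
                              (filter (fun n => Nat.ltb n K1) (seq 0 K))).
  { apply Permutation_map_perm_prefix; [exact Hs | lia|].
    intros j Hj. destruct (HN0 j Hj) as [n [Hn Hsn]]. exists n. split; [lia | exact Hsn]. }
  assert (Hdiff : sumN (fun n => z (s n)) K - sumN z K = lsum (map z (map s far_s)) - lsum (map z far)).
  { rewrite !sumN_seq, (lsum_filter z (fun n => Nat.ltb n K1)),
      (lsum_filter (fun n => z (s n)) (fun n => Nat.ltb (s n) K1)).
    rewrite <- (map_map s z (filter (fun n => Nat.ltb (s n) K1) (seq 0 K))), (lsum_perm z _ _ Hnear).
    unfold far_s, far. rewrite map_map. ring. }
  assert (Hfar_s : lsum (map (fun n => Rabs (z n)) (map s far_s)) < eps / 2).
  { apply HK1.
    - apply NoDup_map_NoDup_ForallPairs; [intros a b _ _; apply (proj1 Hs)|].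
      apply NoDup_filter, seq_NoDup.
    - intros p Hp. apply in_map_iff in Hp as [n [<- Hn]]. apply filter_In in Hn as [_ Hn].
      destruct (Nat.ltb_spec (s n) K1); [discriminate | lia]. }
  assert (Hfar : lsum (map (fun n => Rabs (z n)) far) < eps / 2).
  { apply HK1; [apply NoDup_filter, seq_NoDup|].
    intros p Hp. apply filter_In in Hp as [_ Hp]. destruct (Nat.ltb_spec p K1); [discriminate | lia]. }
  pose proof (lsum_abs z (map s far_s)). pose proof (lsum_abs z far).
  rewrite Hdiff. unfold Rminus. eapply Rle_lt_trans; [apply Rabs_triang|]. rewrite Rabs_Ropp. lra.
Qed.

(* Outside [A] the permutation is the identity, so only the absolutely summable
   restriction of [x] to [A] is rearranged. *)
Lemma rearrangement_preserves_sum (x : nat -> R) S (s : nat -> nat) (A : nat -> Prop) :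
  is_perm s -> (forall n, supp s n -> A n) -> sum_over_finite A (fun n => Rabs (x n)) ->
  Un_cv (sumN x) S -> Un_cv (sumN (fun n => x (s n))) S.
Proof.
  intros Hs Hsupp Habs Hcv. set (z := restrict A x).
  apply sum_over_finite_iff_sumN_bounded in Habs as [M HM]; [|intros; apply Rabs_pos].
  assert (HzM : forall m, sumN (fun n => Rabs (z n)) m <= M).
  { intros m. rewrite (sumN_ext _ (restrict A (fun n => Rabs (x n)))); [apply HM|].
    intros a _. unfold z, restrict. destruct (decide A a); [reflexivity | apply Rabs_R0]. }
  assert (Hsplit : forall n, x (s n) = (x n - z n) + z (s n)).
  { intros n. destruct (Nat.eq_dec (s n) n) as [->|Hne]; [ring|].
    assert (HA : decide A n = true) by (apply decide_true, Hsupp, Hne).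
    assert (HAs : decide A (s n) = true).
    { apply decide_true, Hsupp. intros He. apply (proj1 Hs) in He. contradiction. }
    unfold z, restrict. rewrite HA, HAs. ring. }
  apply (Un_cv_ext (fun K => sumN x K + (sumN (fun n => z (s n)) K - sumN z K))).
  { intros K. rewrite (sumN_ext _ _ K (fun n _ => Hsplit n)), sumN_plus, sumN_minus. ring. }
  replace S with (S + 0) by ring. apply CV_plus; [exact Hcv|].
  exact (sumN_perm_minus_cv_0 z M s Hs HzM).
Qed.

Section SumRange.

Variables (x : nat -> R) (S : R) (I : (nat -> Prop) -> Prop).
Hypothesis hI : is_ideal I.
Hypothesis hFin : forall A, finite_set A -> I A.
Hypothesis hconv : Un_cv (sumN x) S.

Definition pos_div (A : nat -> Prop) : Prop := ~ sum_over_finite A (fun n => pos_part (x n)).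
Definition neg_div (A : nat -> Prop) : Prop := ~ sum_over_finite A (fun n => neg_part (x n)).

Lemma SR_sum : SR I x S.
Proof.
  exists (fun n => n). split; [split; [auto | intros m; exists m; reflexivity]|]. split.
  - apply hFin. exists O. intros n Hn. contradiction.
  - apply Un_cv_sum_f_R0_sumN, hconv.
Qed.

Lemma SR_le_of_pos_div A : I A -> pos_div A -> forall r, r <= S -> SR I x r.
Proof.
  intros HA Hdiv r Hr.
  destruct (rearrangement_lowering x (fun n => A n /\ 0 < x n) S (S - r)) as [s [Hs [Hsupp Hscv]]].
  - exact hconv.
  - intros n [_ Hn]; exact Hn.
  - apply sum_from_unbounded_of_pos_div, Hdiv.
  - lra.
  - exists s. split; [exact Hs | split].
    + apply (proj1 (proj2 hI) A (supp s) HA). intros n Hn. apply Hsupp, Hn.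
    + apply Un_cv_sum_f_R0_sumN. replace r with (S - (S - r)) by ring. exact Hscv.
Qed.

Lemma SR_ge_of_neg_div A : I A -> neg_div A -> forall r, S <= r -> SR I x r.
Proof.
  intros HA Hdiv r Hr.
  destruct (rearrangement_raising x (fun n => A n /\ 0 < - x n) S (r - S)) as [s [Hs [Hsupp Hscv]]].
  - exact hconv.
  - intros n [_ Hn]; exact Hn.
  - apply (sum_from_unbounded_of_pos_div A (fun n => - x n)), Hdiv.
  - lra.
  - exists s. split; [exact Hs | split].
    + apply (proj1 (proj2 hI) A (supp s) HA). intros n Hn. apply Hsupp, Hn.
    + apply Un_cv_sum_f_R0_sumN. replace r with (S + (r - S)) by ring. exact Hscv.
Qed.

Lemma pos_or_neg_div A : ~ sum_over_finite A (fun n => Rabs (x n)) -> pos_div A \/ neg_div A.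
Proof.
  intros Hdiv. apply NNPP. intros Hboth. apply Hdiv.
  apply sum_over_finite_abs; apply NNPP; intros H; apply Hboth; [left | right]; exact H.
Qed.

Lemma SR_singleton_iff :
  (forall r, SR I x r <-> r = S) <-> (forall A, I A -> sum_over_finite A (fun n => Rabs (x n))).
Proof.
  split.
  - intros Hsingle A HA. apply NNPP. intros Hdiv.
    destruct (pos_or_neg_div A Hdiv) as [Hpos|Hneg].
    + assert (S - 1 = S) by (apply Hsingle, (SR_le_of_pos_div A HA Hpos); lra). lra.
    + assert (S + 1 = S) by (apply Hsingle, (SR_ge_of_neg_div A HA Hneg); lra). lra.
  - intros Habs r. split; [|intros ->; exact SR_sum].
    intros [s [Hs [HIs Hscv]]]. apply Un_cv_sum_f_R0_sumN in Hscv.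
    exact (UL_sequence _ _ _ Hscv (rearrangement_preserves_sum x S s (supp s) Hs (fun n H => H) (Habs _ HIs) hconv)).
Qed.

Lemma no_neg_div_of_pos_div_neg_summable :
  (exists A, I A /\ pos_div A) ->
  (forall A, I A -> pos_div A -> sum_over_finite A (fun n => neg_part (x n))) ->
  ~ (exists B, I B /\ neg_div B).
Proof.
  intros [A [HA Hpos]] Hsum [B [HB Hneg]].
  assert (HAB : I (fun n => A n \/ B n)) by (apply (proj1 hI); assumption).
  apply Hneg. apply (sum_over_finite_subset (fun n => A n \/ B n)); [intros n Hn; right; exact Hn|].
  apply Hsum; [exact HAB|]. intros HsumAB. apply Hpos. revert HsumAB.
  apply sum_over_finite_subset. intros n Hn; left; exact Hn.
Qed.

Lemma sum_range_cases :
  (forall A, I A -> sum_over_finite A (fun n => Rabs (x n))) \/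
  (exists A, I A /\ pos_div A /\ neg_div A) \/
  ((exists A, I A /\ pos_div A) /\
   (forall A, I A -> pos_div A -> sum_over_finite A (fun n => neg_part (x n)))) \/
  ((exists B, I B /\ neg_div B) /\
   (forall B, I B -> neg_div B -> sum_over_finite B (fun n => pos_part (x n)))).
Proof.
  destruct (classic (forall A, I A -> sum_over_finite A (fun n => Rabs (x n)))) as [Habs|Habs];
    [left; exact Habs | right].
  apply not_all_ex_not in Habs as [A HA]. apply imply_to_and in HA as [HA Hdiv].
  destruct (classic (exists A, I A /\ pos_div A /\ neg_div A)) as [Hboth|Hboth]; [left; exact Hboth | right].
  assert (Hexcl : forall C, I C -> pos_div C -> ~ neg_div C) by (intros C ? ? ?; apply Hboth; eauto).
  destruct (pos_or_neg_div A Hdiv) as [Hpos|Hneg]; [left | right]; split; eauto.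
  - intros C HC HposC. apply NNPP, (Hexcl C HC HposC).
  - intros C HC HnegC. apply NNPP. intros HposC. exact (Hexcl C HC HposC HnegC).
Qed.

End SumRange.

Theorem mainTheorem8 (x : nat -> R) (S : R) (I : (nat -> Prop) -> Prop)
  (hI : is_ideal I) (hFin : forall A, finite_set A -> I A)
  (hconv : Un_cv (fun N => sum_f_R0 x N) S)
  (hnabs : ~ (exists l, Un_cv (fun N => sum_f_R0 (fun n => Rabs (x n)) N) l)) :
  let C1 := forall A, I A -> sum_over_finite A (fun n => Rabs (x n)) in
  let C2 := exists A, I A /\ ~ sum_over_finite A (fun n => pos_part (x n))
                          /\ ~ sum_over_finite A (fun n => neg_part (x n)) in
  let C3 := (exists A, I A /\ ~ sum_over_finite A (fun n => pos_part (x n))) /\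
            (forall A, I A -> ~ sum_over_finite A (fun n => pos_part (x n)) ->
                       sum_over_finite A (fun n => neg_part (x n))) in
  let C4 := (exists B, I B /\ ~ sum_over_finite B (fun n => neg_part (x n))) /\
            (forall B, I B -> ~ sum_over_finite B (fun n => neg_part (x n)) ->
                       sum_over_finite B (fun n => pos_part (x n))) in
  ((forall r, SR I x r <-> r = S) <-> C1) /\
  (C2 -> forall r, SR I x r) /\
  (C3 -> forall r, r <= S -> SR I x r) /\
  (C4 -> forall r, S <= r -> SR I x r) /\
  ((C1 \/ C2 \/ C3 \/ C4) /\
   ~ (C1 /\ C2) /\ ~ (C1 /\ C3) /\ ~ (C1 /\ C4) /\
   ~ (C2 /\ C3) /\ ~ (C2 /\ C4) /\ ~ (C3 /\ C4)).
Proof.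
  intros C1 C2 C3 C4. apply Un_cv_sum_f_R0_sumN in hconv.
  pose proof (SR_le_of_pos_div x S I hI hconv) as Hlow.
  pose proof (SR_ge_of_neg_div x S I hI hconv) as Hhigh.
  split; [exact (SR_singleton_iff x S I hI hFin hconv)|].
  split; [intros [A [HA [Hpos Hneg]]] r; destruct (Rle_lt_dec r S);
          [apply (Hlow A) | apply (Hhigh A); [..|lra]]; assumption|].
  split; [intros [[A [HA Hpos]] _]; exact (Hlow A HA Hpos)|].
  split; [intros [[B [HB Hneg]] _]; exact (Hhigh B HB Hneg)|].
  split; [exact (sum_range_cases x I)|].
  repeat split.
  - intros [H1 [A [HA [Hpos _]]]]. exact (Hpos (sum_over_finite_pos_of_abs A x (H1 A HA))).
  - intros [H1 [[A [HA Hpos]] _]]. exact (Hpos (sum_over_finite_pos_of_abs A x (H1 A HA))).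
  - intros [H1 [[B [HB Hneg]] _]]. exact (Hneg (sum_over_finite_neg_of_abs B x (H1 B HB))).
  - intros [[A [HA [Hpos Hneg]]] [_ H3]]. exact (Hneg (H3 A HA Hpos)).
  - intros [[A [HA [Hpos Hneg]]] [_ H4]]. exact (Hpos (H4 A HA Hneg)).
  - intros [[HexA H3] [HexB _]]. exact (no_neg_div_of_pos_div_neg_summable x I hI HexA H3 HexB).
Qed.
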